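(* Let $\beta,\delta>0$, $\gamma\in\mathbb{R}$, and suppose $p(x)=\beta x^4+\gamma x^3+\delta x^2$ attains its global minimum at the origin. Then $$\int_{-\infty}^{\infty}e^{-[\beta x^4+\gamma x^3+\delta x^2]}\,dx\approx\left[\beta^{1/4}+|\gamma|^{1/3}+\delta^{1/2}\right]^{-1},$$ with implied constants independent of $\beta,\gamma,\delta$.
   Context: $X\approx Y$ means there is an absolute constant $c>0$ with $cY\le X\le c^{-1}Y$. *)

From mathcomp Require Import all_boot all_order all_algebra.
From mathcomp Require Import all_classical all_reals all_analysis.
Set Implicit Arguments. Unset Strict Implicit. Unset Printing Implicit Defensive.
Import Order.TTheory GRing.Theory Num.Theory.
Local Open Scope ring_scope.

Definition quartic {R : realType} (beta gamma delta : R) (x : R) : R :=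
  beta * x ^+ 4 + gamma * x ^+ 3 + delta * x ^+ 2.

From mathcomp Require Import all_boot all_order all_algebra.
From mathcomp Require Import all_classical all_reals all_analysis.
From mathcomp Require Import ring lra measurable_realfun.
Import Order.TTheory GRing.Theory Num.Theory.
Import numFieldTopology.Exports numFieldNormedType.Exports.
Set Implicit Arguments. Unset Strict Implicit.
Local Open Scope classical_set_scope.
Local Open Scope ring_scope.

(* Write beta = a^4 and delta = b^2.  Minimality of p at 0 forces gamma^2 <= 4 beta delta,
   i.e. |gamma| <= 2 a^2 b; hence |gamma|^(1/3) <= 2 (a + b), so the right-hand side is
   comparable to 1/(a + b), and
     (a^2 x^2 - b|x|)^2 <= p(x) <= (a^2 x^2 + b|x|)^2.
   The upper bound gives p <= 4 on |x| <= 1/(a + b), hence the integral is at least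
   2 e^-4 / (a + b).  The lower bound vanishes only at 0 and +-b/a^2 and grows at least
   linearly, with slope (a + b)/4, away from these points; so e^-p is dominated by e times
   three Laplace kernels e^(-k|x - c|), each of integral 2/k. *)

Section quartic_bounds.
Variable R : realType.
Implicit Types a b beta gamma delta x u w : R.

Lemma quartic_min0_discriminant beta gamma delta : 0 < beta -> 0 <= delta ->
  (forall x, quartic beta gamma delta 0 <= quartic beta gamma delta x) ->
  gamma ^+ 2 <= 4 * beta * delta.
Proof.
move=> beta_gt0 delta_ge0 min0; rewrite leNgt; apply/negP => disc_gt.
pose x := - gamma / (2 * beta).
have beta2x : 2 * beta * x = - gamma by rewrite /x mulrC divfK // mulf_neq0 // gt_eqF.
have x2_gt0 : 0 < x ^+ 2.
  rewrite exprn_even_gt0 //; apply: contraTneq disc_gt => x0.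
  by move: beta2x; rewrite x0 mulr0 => /eqP; rewrite eq_sym oppr_eq0 => /eqP ->; nra.
(* p(x) = x^2 (beta x^2 + gamma x + delta), and the quadratic factor is negative at its vertex *)
have quad_lt0 : beta * x ^+ 2 + gamma * x + delta < 0.
  suff : 4 * beta * (beta * x ^+ 2 + gamma * x + delta) < 0 by nra.
  have -> : 4 * beta * (beta * x ^+ 2 + gamma * x + delta) =
      (2 * beta * x) ^+ 2 + 2 * gamma * (2 * beta * x) + 4 * beta * delta by ring.
  rewrite beta2x; nra.
have := min0 x; rewrite /quartic !expr0n /=.
have -> : beta * x ^+ 4 + gamma * x ^+ 3 + delta * x ^+ 2 =
   x ^+ 2 * (beta * x ^+ 2 + gamma * x + delta) by ring.
nra.
Qed.

Lemma discriminant_norm_le a b gamma : 0 <= a -> 0 <= b ->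
  gamma ^+ 2 <= 4 * a ^+ 4 * b ^+ 2 -> `|gamma| <= 2 * a ^+ 2 * b.
Proof.
move=> a_ge0 b_ge0 disc; have c_ge0 : 0 <= 2 * a ^+ 2 * b by rewrite !mulr_ge0 ?exprn_ge0.
rewrite -(ger0_norm c_ge0) -ler_sqr ?nnegrE // !real_normK ?num_real //; nra.
Qed.

Lemma le_twice_sum_of_cube_le a b g : 0 <= a -> 0 <= b -> 0 <= g ->
  g ^+ 3 <= 2 * a ^+ 2 * b -> g <= 2 * (a + b).
Proof.
move=> a_ge0 b_ge0 g_ge0 g3_le; rewrite leNgt; apply/negP => lt_g.
have : (2 * (a + b)) ^+ 3 < g ^+ 3 by rewrite ltrXn2r // mulr_ge0 ?addr_ge0.
have : 2 * a ^+ 2 * b <= (2 * (a + b)) ^+ 3 by nra.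
lra.
Qed.

Lemma quartic_sandwich a b gamma x : 0 <= a -> 0 <= b ->
  gamma ^+ 2 <= 4 * a ^+ 4 * b ^+ 2 ->
  (a ^+ 2 * x ^+ 2 - b * `|x|) ^+ 2 <= quartic (a ^+ 4) gamma (b ^+ 2) x <=
  (a ^+ 2 * x ^+ 2 + b * `|x|) ^+ 2.
Proof.
move=> a_ge0 b_ge0 disc.
have gamma_le := discriminant_norm_le a_ge0 b_ge0 disc.
have cubic_le : `|gamma * x ^+ 3| <= 2 * a ^+ 2 * b * `|x| ^+ 3.
  by rewrite normrM normrX ler_wpM2r ?exprn_ge0.
have := ler_norm (gamma * x ^+ 3); have := ler_norm (- (gamma * x ^+ 3)).
rewrite normrN /quartic => cubic_ge cubic_le'.
have x2 : x ^+ 2 = `|x| ^+ 2 by rewrite real_normK ?num_real.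
have x4 : x ^+ 4 = `|x| ^+ 4 by rewrite -normrX ger0_norm // exprn_even_ge0.
rewrite x4 x2 in cubic_le *.
apply/andP; split; nra.
Qed.

Lemma quartic_le4 a b gamma x : 0 <= a -> 0 <= b ->
  gamma ^+ 2 <= 4 * a ^+ 4 * b ^+ 2 -> `|x| * (a + b) <= 1 ->
  quartic (a ^+ 4) gamma (b ^+ 2) x <= 4.
Proof.
move=> a_ge0 b_ge0 disc x_small.
have /andP[_ /le_trans->//] := quartic_sandwich x a_ge0 b_ge0 disc.
have ax := mulr_ge0 (normr_ge0 x) a_ge0; have bx := mulr_ge0 (normr_ge0 x) b_ge0.
have -> : a ^+ 2 * x ^+ 2 = (`|x| * a) ^+ 2 by rewrite exprMn real_normK ?num_real // mulrC.
rewrite [b * _]mulrC mulrDr in x_small *.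
set p := `|x| * a in ax x_small *; set q := `|x| * b in bx x_small *.
have p1 : p ^+ 2 <= 1 by nra.
nra.
Qed.

Lemma sqr_mul_ge_min a b u w : 0 <= a -> 0 <= b -> 0 <= u -> 0 <= w ->
  b <= a ^+ 2 * (u + w) -> (a + b) / 4 * Num.min u w - 1 <= (a ^+ 2 * u * w) ^+ 2.
Proof.
move=> a_ge0 b_ge0.
wlog le_uw : u w / u <= w => [hwlog u_ge0 w_ge0|].
  case/orP: (le_total u w) => [le_uw|le_wu]; first exact: hwlog.
  by rewrite minC (addrC u) (mulrAC _ u); exact: hwlog.
move=> u_ge0 w_ge0 b_le; rewrite (min_idPl le_uw).
set t := a ^+ 2 * u * w.
have t_ge_au : a * u - 1 / 4 <= t.
  have : a ^+ 2 * u * u <= t by rewrite ler_wpM2l ?mulr_ge0 ?exprn_ge0.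
  have := sqr_ge0 (2 * (a * u) - 1); nra.
have t_ge_bu : b * u / 2 <= t.
  have : a ^+ 2 * u * ((u + w) / 2) <= t.
    by rewrite ler_wpM2l ?mulr_ge0 ?exprn_ge0 //; lra.
  have := ler_wpM2r u_ge0 b_le; nra.
have := sqr_ge0 (2 * t - 1); have := mulr_ge0 a_ge0 u_ge0; nra.
Qed.

Lemma quartic_ge_min a b gamma x : 0 < a -> 0 <= b ->
  gamma ^+ 2 <= 4 * a ^+ 4 * b ^+ 2 ->
  (a + b) / 4 * Num.min `|x| `| `|x| - b / a ^+ 2| - 1 <=
  quartic (a ^+ 4) gamma (b ^+ 2) x.
Proof.
move=> a_gt0 b_ge0 disc; set u0 := b / a ^+ 2.
have a2u0 : a ^+ 2 * u0 = b by rewrite mulrC divfK // expf_neq0 // gt_eqF.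
have /andP[+ _] := quartic_sandwich x (ltW a_gt0) b_ge0 disc; apply: le_trans.
have -> : a ^+ 2 * x ^+ 2 - b * `|x| = a ^+ 2 * `|x| * (`|x| - u0).
  by rewrite -a2u0 -[x ^+ 2]real_normK ?num_real //; ring.
rewrite exprMn -[(_ - u0) ^+ 2]real_normK ?num_real // -exprMn.
apply: sqr_mul_ge_min; rewrite ?normr_ge0 ?(ltW a_gt0) //.
have := ler_norm (- (`|x| - u0)); rewrite normrN => le_u0.
by rewrite -{1}a2u0 ler_wpM2l ?exprn_ge0 //; lra.
Qed.

End quartic_bounds.

Section laplace_kernel.
Variable R : realType.
Notation mu := (@lebesgue_measure R).
Implicit Types k c x : R.

Lemma measurable_EFin_continuous (D : set R) (f : R -> R) :
  continuous f -> measurable_fun D (EFin \o f).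
Proof.
move=> f_cont; apply/measurable_EFinP; apply: measurable_funTS.
exact: continuous_measurable_fun.
Qed.

Definition laplace_kernel k c x := expR (- k * `|x - c|).

Lemma laplace_kernel_ge0 k c x : 0 <= laplace_kernel k c x.
Proof. exact: expR_ge0. Qed.

Lemma continuous_laplace_kernel k c : continuous (laplace_kernel k c).
Proof.
move=> x; apply: continuous_comp; last exact: continuous_expR.
apply: continuousM; first exact: cst_continuous.
apply: continuous_comp; last exact: norm_continuous.
by apply: continuousB; [by [] | exact: cst_continuous].
Qed.

Lemma is_derive_expN_affine k c x : k != 0 ->
  is_derive x 1 (fun y => - (k^-1 * expR (- k * (y - c)))) (expR (- k * (x - c))).
Proof.
move=> k_neq0; apply: is_derive_eq.
by rewrite subr0 /GRing.scale /=; field.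
Qed.

Lemma integral_laplace_kernel_itvcy k c : 0 < k ->
  (\int[mu]_(x in `[c, +oo[) (laplace_kernel k c x)%:E = (k^-1)%:E)%E.
Proof.
move=> k_gt0; have k_neq0 : k != 0 by rewrite gt_eqF.
pose F y := - (k^-1 * expR (- k * (y - c))).
rewrite (@ge0_continuous_FTC2y _ _ F _ 0).
- by rewrite /F subrr mulr0 expR0 mulr1 sub0e -EFinN opprK.
- by move=> x _; exact: laplace_kernel_ge0.
- exact/continuous_subspaceT/continuous_laplace_kernel.
- have lim0 : expR (- k * (y - c)) @[y --> +oo] --> 0.
    have -> : (fun y => expR (- k * (y - c))) = (fun z => expR (- z)) \o (fun y => k * (y - c)).
      by apply/funext => y /=; rewrite mulNr.
    apply: (@cvg_comp _ _ _ _ _ _ (pinfty_nbhs R)); last exact: cvgr_expR.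
    by apply: gt0_cvgMry => //; exact: cvg_addrr.
  by rewrite -oppr0 -(mulr0 k^-1); apply: cvgN; exact: cvgMr.
- by move=> x _; exact: (ex_derive (is_derive := is_derive_expN_affine c x k_neq0)).
- apply: cvg_at_right_filter; apply: differentiable_continuous.
  by apply/derivable1_diffP; exact: (ex_derive (is_derive := is_derive_expN_affine c c k_neq0)).
- move=> x; rewrite in_itv /= andbT => cx.
  rewrite derive1E (derive_val (is_derive := is_derive_expN_affine c x k_neq0)).
  by rewrite /laplace_kernel ger0_norm // subr_ge0 ltW.
Qed.

Lemma laplace_kernelN k c : laplace_kernel k c \o -%R = laplace_kernel k (- c).
Proof. by apply/funext => x; rewrite /= /laplace_kernel -opprD normrN opprK. Qed.

Lemma integral_laplace_kernel k c : 0 < k ->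
  (\int[mu]_(x in [set: R]) (laplace_kernel k c x)%:E = (2 / k)%:E)%E.
Proof.
move=> k_gt0.
have mlap : measurable_fun [set: R] (EFin \o laplace_kernel k c).
  by apply: measurable_EFin_continuous; exact: continuous_laplace_kernel.
rewrite -(setUv `[c, +oo[%classic) ge0_integral_setU //=; first last.
- exact/disj_setPCl.
- by move=> x _; rewrite lee_fin laplace_kernel_ge0.
- by rewrite setUv.
- exact: measurableC.
rewrite setCitvr integral_itv_bndo_bndc; last exact: measurable_funTS.
rewrite -[c in `]-oo, c]]opprK ge0_integration_by_substitutionNy; first last.
- by move=> x _; exact: laplace_kernel_ge0.
- exact/continuous_subspaceT/continuous_laplace_kernel.
rewrite laplace_kernelN !integral_laplace_kernel_itvcy // -EFinD; congr EFin.
by rewrite -mulr2n mulr_natl.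
Qed.

Lemma expNquartic_le_laplace a b gamma x : 0 < a -> 0 <= b ->
  gamma ^+ 2 <= 4 * a ^+ 4 * b ^+ 2 ->
  expR (- quartic (a ^+ 4) gamma (b ^+ 2) x) <=
  expR 1 * (laplace_kernel ((a + b) / 4) 0 x + laplace_kernel ((a + b) / 4) (b / a ^+ 2) x
            + laplace_kernel ((a + b) / 4) (- (b / a ^+ 2)) x).
Proof.
move=> a_gt0 b_ge0 disc.
have := quartic_ge_min x a_gt0 b_ge0 disc.
set k := (a + b) / 4; set u0 := b / a ^+ 2.
set w := `| `|x| - u0|; set m := Num.min `|x| w => quartic_ge.
apply: (@le_trans _ _ (expR 1 * expR (- k * m))).
  by rewrite -expRD ler_expR mulNr lerNl opprB.
rewrite ler_wpM2l ?expR_ge0 //.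
have lap_w : expR (- k * w) <= laplace_kernel k u0 x + laplace_kernel k (- u0) x.
  have := laplace_kernel_ge0 k u0 x; have := laplace_kernel_ge0 k (- u0) x.
  rewrite /w /laplace_kernel opprK; have [x_ge0|x_lt0] := lerP 0 x.
    by rewrite (ger0_norm x_ge0); lra.
  by rewrite (ltr0_norm x_lt0) -opprD normrN; lra.
have := laplace_kernel_ge0 k 0 x; rewrite {1 2}/laplace_kernel subr0.
have := expR_ge0 (- k * w).
by rewrite /m minEle; case: ifP; lra.
Qed.

End laplace_kernel.

Section quartic_integral.
Variable R : realType.
Notation mu := (@lebesgue_measure R).
Implicit Types a b gamma : R.

Lemma continuous_quartic beta gamma delta : continuous (@quartic R beta gamma delta).
Proof.
move=> x; rewrite /quartic.
by apply: cvgD; [apply: cvgD|]; apply: cvgM; (exact: cvg_cst || exact: exprn_continuous).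
Qed.

Lemma measurable_expN_quartic (D : set R) beta gamma delta :
  measurable_fun D (fun x => (expR (- quartic beta gamma delta x))%:E).
Proof.
apply: measurable_EFin_continuous => x.
apply: continuous_comp; last exact: continuous_expR.
by apply: cvgN; exact: continuous_quartic.
Qed.

Lemma integral_expN_quartic_ge a b gamma : 0 < a -> 0 < b ->
  gamma ^+ 2 <= 4 * a ^+ 4 * b ^+ 2 ->
  ((2 * expR (-4) / (a + b))%:E <=
   \int[mu]_(x in [set: R]) (expR (- quartic (a ^+ 4) gamma (b ^+ 2) x))%:E)%E.
Proof.
move=> a_gt0 b_gt0 disc; set r := (a + b)^-1.
have r_gt0 : 0 < r by rewrite invr_gt0 addr_gt0.
have := @ge0_subset_integral _ _ _ mu `[- r, r] [set: R] (measurable_itv _) measurableT _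
  (measurable_expN_quartic (a ^+ 4) gamma (b ^+ 2)) (fun x _ => expR_ge0 _) (fun x _ => I).
move=> le_sub; apply: (le_trans _ le_sub).
apply: (@le_trans _ _ (\int[mu]_(x in `[(- r)%R, r]) (cst (expR (-4))%:E x))%E).
  rewrite integral_cst //= lebesgue_measure_itv /= lte_fin gtrN //.
  by rewrite -EFinD -EFinM lee_fin opprK mulrC /r; lra.
apply: ge0_le_integral => //.
- by move=> x _; rewrite lee_fin expR_ge0.
- exact: measurable_expN_quartic.
- move=> x; rewrite /= in_itv /= => /andP[x_ge x_le].
  rewrite lee_fin ler_expR lerN2; apply: quartic_le4 (ltW a_gt0) (ltW b_gt0) disc _.
  have : `|x| <= r by rewrite ler_norml x_ge x_le.
  move=> /(ler_wpM2r (ltW (addr_gt0 a_gt0 b_gt0))).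
  by rewrite /r mulVf ?gt_eqF ?addr_gt0.
Qed.

Lemma integral_expN_quartic_le a b gamma : 0 < a -> 0 < b ->
  gamma ^+ 2 <= 4 * a ^+ 4 * b ^+ 2 ->
  (\int[mu]_(x in [set: R]) (expR (- quartic (a ^+ 4) gamma (b ^+ 2) x))%:E <=
   (24 * expR 1 / (a + b))%:E)%E.
Proof.
move=> a_gt0 b_gt0 disc.
set k := (a + b) / 4; set u0 := b / a ^+ 2.
have k_gt0 : 0 < k by rewrite divr_gt0 // addr_gt0.
have lap_ge0 c x : (0 <= (laplace_kernel k c x)%:E)%E by rewrite lee_fin laplace_kernel_ge0.
have mlap c : measurable_fun [set: R] (fun x => (laplace_kernel k c x)%:E).
  by apply: measurable_EFin_continuous; exact: continuous_laplace_kernel.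
apply: (@le_trans _ _ (\int[mu]_(x in [set: R]) ((expR 1)%:E *
   ((laplace_kernel k 0 x)%:E + (laplace_kernel k u0 x)%:E + (laplace_kernel k (- u0) x)%:E)))%E).
  apply: ge0_le_integral => //.
  - exact: measurable_expN_quartic.
  - apply: emeasurable_funM => //.
    exact: emeasurable_funD (emeasurable_funD (mlap 0) (mlap u0)) (mlap (- u0)).
  - move=> x _; rewrite -!EFinD -EFinM lee_fin.
    exact: expNquartic_le_laplace a_gt0 (ltW b_gt0) disc.
have mlap2 := emeasurable_funD (mlap 0) (mlap u0).
rewrite ge0_integralZl_EFin ?expR_ge0 //; last 2 first.
- by move=> x; rewrite !adde_ge0 ?lap_ge0.
- exact: emeasurable_funD mlap2 (mlap (- u0)).
rewrite ge0_integralD //; last 2 first.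
- by move=> x; rewrite adde_ge0 ?lap_ge0.
- exact: mlap.
have lapE c : (\int[mu]_(x in [set: R]) (laplace_kernel k c x)%:E = (2 / k)%:E)%E.
  exact: integral_laplace_kernel.
rewrite ge0_integralD //; [|exact: mlap..].
rewrite !lapE -!EFinD -EFinM lee_fin.
suff -> : expR 1 * (2 / k + 2 / k + 2 / k) = 24 * expR 1 / (a + b) by [].
by rewrite /k; field; rewrite gt_eqF ?addr_gt0.
Qed.

End quartic_integral.

Lemma powR_invnK (R : realType) (x : R) (n : nat) : (0 < n)%N -> 0 <= x ->
  (x `^ n%:R^-1) ^+ n = x.
Proof.
move=> n_gt0 x_ge0; rewrite -powR_mulrn ?powR_ge0 // -powRrM mulVf ?powRr1 //.
by rewrite pnatr_eq0 -lt0n.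
Qed.

Theorem lemma4p7 (R : realType) :
  exists c : R, 0 < c /\
  forall beta gamma delta : R, 0 < beta -> 0 < delta ->
    (forall x : R, quartic beta gamma delta 0 <= quartic beta gamma delta x) ->
    let Y := (powR beta (4^-1) + powR `|gamma| (3^-1) + powR delta (2^-1))^-1 in
    let I := (\int[lebesgue_measure]_(x in [set: R])
                 (expR (- quartic beta gamma delta x))%:E)%E in
    ((c * Y)%:E <= I)%E /\ (I <= (c^-1 * Y)%:E)%E.
Proof.
exists (expR (-4) / 72); split; first by rewrite divr_gt0 ?expR_gt0.
move=> beta gamma delta beta_gt0 delta_gt0 min0 Y I; rewrite {}/Y {}/I.
have disc := quartic_min0_discriminant beta_gt0 (ltW delta_gt0) min0.
set a := powR beta 4^-1; set g := powR `|gamma| 3^-1; set b := powR delta 2^-1.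
have a_gt0 : 0 < a by exact: powR_gt0.
have b_gt0 : 0 < b by exact: powR_gt0.
have g_ge0 : 0 <= g by exact: powR_ge0.
have a4 : a ^+ 4 = beta by exact: powR_invnK (ltW beta_gt0).
have b2 : b ^+ 2 = delta by exact: powR_invnK (ltW delta_gt0).
have g3 : g ^+ 3 = `|gamma| by exact: powR_invnK (normr_ge0 _).
rewrite -a4 -b2 in disc *; set Y := (a + g + b)^-1.
have g_le : g <= 2 * (a + b).
  apply: le_twice_sum_of_cube_le (ltW a_gt0) (ltW b_gt0) g_ge0 _.
  by rewrite g3; exact: discriminant_norm_le (ltW a_gt0) (ltW b_gt0) disc.
have ab_gt0 : 0 < a + b by exact: addr_gt0.
have agb_gt0 : 0 < a + g + b by lra.
have Y_gt0 : 0 < Y by rewrite invr_gt0.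
have Y_le : Y <= (a + b)^-1 by rewrite /Y lef_pV2 ?posrE //; lra.
have Y_ge : (a + b)^-1 <= 3 * Y by rewrite /Y -[3]invrK -invfM lef_pV2 ?posrE; lra.
have E4_gt0 := expR_gt0 (-4 : R).
split.
- apply: le_trans (integral_expN_quartic_ge a_gt0 b_gt0 disc); rewrite lee_fin.
  have := ler_wpM2l (ltW E4_gt0) Y_le; have := mulr_gt0 E4_gt0 Y_gt0; lra.
- apply: le_trans (integral_expN_quartic_le a_gt0 b_gt0 disc) _; rewrite lee_fin.
  have e_le : expR 1 <= expR 4 :> R by rewrite ler_expR ler1n.
  have := ler_wpM2l (expR_ge0 1) Y_ge; have := ler_wpM2r (ltW Y_gt0) e_le.
  by rewrite invfM invrK expRN invrK; lra.
Qed.
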